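(* Assume the setting described in the context, let $\gamma<\eta<\min\{\beta,\alpha\}$ with $K\,\mathrm{Lip}_u G\left(\frac{1}{\eta-\gamma}+\frac{1}{\beta-\eta}+\frac{1}{\alpha-\eta}\right)<1$, and let $M^c(\omega)=\{u_0\in H: u(\cdot,u_0,\omega)\in C_\eta\}=\{v+h^c(v,\omega):v\in H^c\}$ be the center manifold of the random equation $\frac{du}{dt}=Au+z(\theta_t\omega)u+G(\theta_t\omega,u)$. Then the random set \[ \widetilde M^c(\omega)=\{e^{z(\omega)}u: u\in M^c(\omega)\}=\{v+e^{z(\omega)}h^c(e^{-z(\omega)}v,\omega): v\in H^c\} \] is a center manifold for the stochastic evolution equation $\frac{du}{dt}=Au+F(u)+u\circ\dot W(t)$; in particular it is forward invariant under the random dynamical system $\hat u$ generated by that equation: $\hat u(t,\widetilde M^c(\omega),\omega)\subset\widetilde M^c(\theta_t\omega)$ for $t\ge0$.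
   Context: $H$ is a separable Hilbert space with norm $|\cdot|$. $A:D(A)\to H$ generates a strongly continuous semigroup $e^{At}$ satisfying an exponential trichotomy with exponents $\alpha>\gamma>0>-\gamma>-\beta$ and bound $K$: there are continuous projections $P^c,P^u,P^s$ with $P^c+P^u+P^s=\mathrm{id}$, $P^iP^j=0$ for $i\neq j$, each commuting with $e^{At}$ for $t\ge 0$; with $H^i=P^iH$, $e^{At}|_{H^i}$ is an isomorphism for $t\ge0$ (extended to $t<0$ by inversion); and $|e^{At}P^cv|\le Ke^{\gamma|t|}|P^cv|$ ($t\in\mathbb R$), $|e^{At}P^uv|\le Ke^{\alpha t}|P^uv|$ ($t\le0$), $|e^{At}P^sv|\le Ke^{-\beta t}|P^sv|$ ($t\ge0$). $F:H\to H$, $F(0)=0$, globally Lipschitz. $(\Omega,\mathcal F,\mathbb P,\{\theta_t\})$ is the Wiener shift of a two-sided scalar Wiener process $W$, restricted to a $\theta$-invariant full-measure set of paths with sublinear growth; $z(\omega)=-\mu\int_{-\infty}^0e^{\mu\tau}\omega(\tau)d\tau$ for fixed $\mu>0$, so $z(\theta_t\omega)$ is the stationary solution of $dz+\mu z\,dt=dW$. $G(\omega,u)=e^{-z(\omega)}F(e^{z(\omega)}u)$ with Lipschitz constant $\mathrm{Lip}_uG$ in $u$. $\Psi_A(t,s)=\exp[A(t-s)+\int_s^tz(\theta_r\omega)dr]$; $u(t,u_0,\omega)$ is the mild solution $u(t)=\Psi_A(t,0)u_0+\int_0^t\Psi_A(t,s)G(\theta_s\omega,u(s))ds$. $C_\eta$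 is the Banach space of $\phi\in C(\mathbb R,H)$ with $\sup_t \exp[-\eta|t|-\int_0^tz(\theta_r\omega)dr]|\phi(t)|<\infty$. The random dynamical system of the Stratonovich equation $\frac{du}{dt}=Au+F(u)+u\circ\dot W$ is $\hat u(t,v,\omega)=e^{z(\theta_t\omega)}u(t,e^{-z(\omega)}v,\omega)$. A center manifold of a random dynamical system $\phi$ is a forward invariant random set ($\phi(t,M(\omega),\omega)\subset M(\theta_t\omega)$, $t\ge0$) of the form $\{v+h(v,\omega):v\in H^c\}$ with $h(\cdot,\omega):H^c\to H^u\oplus H^s$ Lipschitz, $h(0,\omega)=0$, and $h(v,\cdot)$ measurable. *)

From Stdlib Require Import Reals.
From Coquelicot Require Import Coquelicot.
Open Scope R_scope.

(* A separable Hilbert space: complete normed R-space whose norm satisfies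
   the parallelogram law (Jordan-von Neumann), with a countable dense set. *)
Definition hilbert_norm {H : CompleteNormedModule R_AbsRing} : Prop :=
  forall x y : H,
    norm (plus x y) ^ 2 + norm (minus x y) ^ 2 = 2 * norm x ^ 2 + 2 * norm y ^ 2.

Definition separable (H : CompleteNormedModule R_AbsRing) : Prop :=
  exists d : nat -> H, forall (x : H) (eps : R), 0 < eps ->
    exists n, norm (minus x (d n)) < eps.

Definition bounded_linear {H : CompleteNormedModule R_AbsRing} (L : H -> H) : Prop :=
  (forall x y, L (plus x y) = plus (L x) (L y)) /\
  (forall (a : R) x, L (scal a x) = scal a (L x)) /\
  (exists C, forall x, norm (L x) <= C * norm x).

Definition C0_semigroup {H : CompleteNormedModule R_AbsRing} (S : R -> H -> H) : Prop :=
  (forall t, 0 <= t -> bounded_linear (S t)) /\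
  (forall x, S 0 x = x) /\
  (forall t s x, 0 <= t -> 0 <= s -> S (t + s) x = S t (S s x)) /\
  (forall x t, 0 <= t ->
     filterlim (fun s => S s x) (within (fun s => 0 <= s) (locally t)) (locally (S t x))).

Definition exp_trichotomy {H : CompleteNormedModule R_AbsRing} (S : R -> H -> H)
  (Pc Pu Ps : H -> H) (alpha beta gamma K : R) : Prop :=
  0 < gamma /\ gamma < alpha /\ gamma < beta /\
  bounded_linear Pc /\ bounded_linear Pu /\ bounded_linear Ps /\
  (forall x, plus (Pc x) (plus (Pu x) (Ps x)) = x) /\
  (forall x, Pc (Pu x) = zero /\ Pc (Ps x) = zero /\ Pu (Pc x) = zero /\
             Pu (Ps x) = zero /\ Ps (Pc x) = zero /\ Ps (Pu x) = zero) /\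
  (forall t x, 0 <= t ->
     S t (Pc x) = Pc (S t x) /\ S t (Pu x) = Pu (S t x) /\ S t (Ps x) = Ps (S t x)) /\
  (forall t, 0 <= t -> forall P, (P = Pc \/ P = Pu) ->
     (forall x y, P x = x -> P y = y -> S t x = S t y -> x = y) /\
     (forall y, P y = y -> exists x, P x = x /\ S t x = y)) /\
  (* |e^{At} P^c v| <= K e^{gamma |t|} |P^c v|, t in R
     (for t < 0, e^{At} on H^c is the inverse of e^{-At}) *)
  (forall t v, 0 <= t -> norm (S t (Pc v)) <= K * exp (gamma * t) * norm (Pc v)) /\
  (forall t x, 0 <= t -> Pc x = x -> norm x <= K * exp (gamma * t) * norm (S t x)) /\
  (* |e^{At} P^u v| <= K e^{alpha t} |P^u v|, t <= 0, i.e. for tau = -t >= 0,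
     |x| <= K e^{-alpha tau} |e^{A tau} x| on H^u *)
  (forall t x, 0 <= t -> Pu x = x -> norm x <= K * exp (- alpha * t) * norm (S t x)) /\
  (forall t v, 0 <= t -> norm (S t (Ps v)) <= K * exp (- beta * t) * norm (Ps v)).

(* Omega: continuous paths with omega(0)=0 and sublinear growth; this set is
   theta-invariant and of full Wiener measure. *)
Definition Omega (w : R -> R) : Prop :=
  (forall t, continuous w t) /\ w 0 = 0 /\
  filterlim (fun t => w t / t) (Rbar_locally p_infty) (locally 0) /\
  filterlim (fun t => w t / t) (Rbar_locally m_infty) (locally 0).

Definition theta (t : R) (w : R -> R) : R -> R := fun s => w (t + s) - w t.

Inductive cyl_meas : ((R -> R) -> Prop) -> Prop :=
  | cyl_gen (t : R) (B : R -> Prop) : open B -> cyl_meas (fun w => B (w t))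
  | cyl_compl (A : (R -> R) -> Prop) : cyl_meas A -> cyl_meas (fun w => ~ A w)
  | cyl_union (A : nat -> (R -> R) -> Prop) :
      (forall n, cyl_meas (A n)) -> cyl_meas (fun w => exists n, A n w).

Definition rand_measurable {H : CompleteNormedModule R_AbsRing} (f : (R -> R) -> H) : Prop :=
  forall U : H -> Prop, open U ->
    exists A, cyl_meas A /\ forall w, Omega w -> (U (f w) <-> A w).

Definition zOU (mu : R) (w : R -> R) : R :=
  - mu * RInt_gen (fun tau => exp (mu * tau) * w tau) (Rbar_locally m_infty) (at_point 0).

Definition Gfun {H : CompleteNormedModule R_AbsRing} (mu : R) (F : H -> H)
  (w : R -> R) (u : H) : H :=
  scal (exp (- zOU mu w)) (F (scal (exp (zOU mu w)) u)).

Definition PsiA {H : CompleteNormedModule R_AbsRing} (S : R -> H -> H) (mu : R)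
  (w : R -> R) (t s : R) (x : H) : H :=
  scal (exp (RInt (fun r => zOU mu (theta r w)) s t)) (S (t - s) x).

Definition is_mild_solution {H : CompleteNormedModule R_AbsRing} (S : R -> H -> H)
  (mu : R) (F : H -> H) (u : R -> H -> (R -> R) -> H) : Prop :=
  forall w u0, Omega w ->
    (forall t, 0 <= t ->
       filterlim (fun s => u s u0 w) (within (fun s => 0 <= s) (locally t))
                 (locally (u t u0 w))) /\
    (forall t, 0 <= t ->
       exists I, is_RInt (fun s => PsiA S mu w t s (Gfun mu F (theta s w) (u s u0 w))) 0 t I
              /\ u t u0 w = plus (PsiA S mu w t 0 u0) I).

Definition full_mild_traj {H : CompleteNormedModule R_AbsRing} (S : R -> H -> H)
  (mu : R) (F : H -> H) (w : R -> R) (phi : R -> H) : Prop :=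
  (forall t, continuous phi t) /\
  forall s t, s <= t ->
    exists I, is_RInt (fun r => PsiA S mu w t r (Gfun mu F (theta r w) (phi r))) s t I
           /\ phi t = plus (PsiA S mu w t s (phi s)) I.

Definition in_C_eta {H : CompleteNormedModule R_AbsRing} (mu eta : R) (w : R -> R)
  (phi : R -> H) : Prop :=
  exists C, forall t,
    exp (- eta * Rabs t - RInt (fun r => zOU mu (theta r w)) 0 t) * norm (phi t) <= C.

Definition Mc_eta {H : CompleteNormedModule R_AbsRing} (S : R -> H -> H)
  (mu : R) (F : H -> H) (eta : R) (w : R -> R) (u0 : H) : Prop :=
  exists phi : R -> H, phi 0 = u0 /\ full_mild_traj S mu F w phi /\ in_C_eta mu eta w phi.

(* RDS of the Stratonovich equation: hat u(t,v,omega) = e^{z(theta_t omega)} u(t, e^{-z(omega)} v, omega) *)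
Definition hat_u {H : CompleteNormedModule R_AbsRing} (mu : R)
  (u : R -> H -> (R -> R) -> H) (t : R) (v : H) (w : R -> R) : H :=
  scal (exp (zOU mu (theta t w))) (u t (scal (exp (- zOU mu w)) v) w).

Definition center_manifold_with {H : CompleteNormedModule R_AbsRing} (Pc : H -> H)
  (phi : R -> H -> (R -> R) -> H) (M : (R -> R) -> H -> Prop)
  (h : H -> (R -> R) -> H) : Prop :=
  (forall w, Omega w -> forall x, M w x <-> exists v, Pc v = v /\ x = plus v (h v w)) /\
  (forall w, Omega w -> forall v, Pc v = v -> Pc (h v w) = zero) /\
  (forall w, Omega w -> exists L, 0 <= L /\ forall v1 v2, Pc v1 = v1 -> Pc v2 = v2 ->
      norm (minus (h v1 w) (h v2 w)) <= L * norm (minus v1 v2)) /\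
  (forall w, Omega w -> h zero w = zero) /\
  (forall v, Pc v = v -> rand_measurable (h v)) /\
  (forall w, Omega w -> forall t, 0 <= t -> forall x, M w x -> M (theta t w) (phi t x w)).

From Stdlib Require Import Reals Lra Lia Classical ClassicalEpsilon.
From Coquelicot Require Import Coquelicot.
Open Scope R_scope.

(* The Stratonovich cocycle is conjugate to the random cocycle [u] through the random linear
   map [x |-> e^{z(w)} x]: [hat_u t (e^{z(w)} x) w = e^{z(theta_t w)} u t x w].  Being a scalar
   multiple of the identity, this map commutes with [P^c] and carries the graph of [h^c] to the
   graph of [v |-> e^{z(w)} h^c(e^{-z(w)} v, w)], with the same Lipschitz constant, and forward
   invariance is transported by the conjugacy identity.  The only analytic point is the
   measurability of the new graph map in [w]: [z] is measurable as a limit of Riemann sums of the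
   path (the improper integral converges because paths grow sublinearly), and a map that is
   continuous in a real parameter and measurable in [w] stays measurable when the parameter is
   replaced by the measurable [z]. *)

(** * Measurability on the space of paths *)

Definition meas_set (A : (R -> R) -> Prop) : Prop :=
  exists B, cyl_meas B /\ forall w, Omega w -> (A w <-> B w).

Definition meas_fun {T : UniformSpace} (f : (R -> R) -> T) : Prop :=
  forall U : T -> Prop, open U -> meas_set (fun w => U (f w)).

Lemma meas_set_ext (A B : (R -> R) -> Prop) :
  (forall w, Omega w -> (A w <-> B w)) -> meas_set A -> meas_set B.
Proof.
  intros AB [C [HC AC]]. exists C; split; [exact HC|].
  intros w Hw. rewrite <- (AB w Hw). exact (AC w Hw).
Qed.

Lemma meas_set_const (P : Prop) : meas_set (fun _ => P).
Proof.
  exists (fun w => (fun _ : R => P) (w 0)); split; [|tauto].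
  apply (cyl_gen 0 (fun _ => P)). destruct (classic P) as [HP|HP].
  - apply open_ext with (fun _ => True); [tauto|apply open_true].
  - apply open_ext with (fun _ => False); [tauto|apply open_false].
Qed.

Lemma meas_set_compl (A : (R -> R) -> Prop) : meas_set A -> meas_set (fun w => ~ A w).
Proof.
  intros [B [HB AB]]. exists (fun w => ~ B w); split; [now apply cyl_compl|].
  intros w Hw. rewrite (AB w Hw). tauto.
Qed.

Lemma meas_set_Union (A : nat -> (R -> R) -> Prop) :
  (forall n, meas_set (A n)) -> meas_set (fun w => exists n, A n w).
Proof.
  intros HA. destruct (choice _ HA) as [B HB].
  exists (fun w => exists n, B n w); split.
  - apply cyl_union. intro n. apply HB.
  - intros w Hw. split; intros [n Hn]; exists n; apply (proj2 (HB n) w Hw); exact Hn.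
Qed.

Lemma meas_set_Inter (A : nat -> (R -> R) -> Prop) :
  (forall n, meas_set (A n)) -> meas_set (fun w => forall n, A n w).
Proof.
  intros HA.
  apply meas_set_ext with (fun w => ~ exists n, ~ A n w).
  - intros w _. split.
    + intros HnA n. apply NNPP. intros Hn. apply HnA. now exists n.
    + intros Hall [n Hn]. exact (Hn (Hall n)).
  - apply meas_set_compl, meas_set_Union. intro n. now apply meas_set_compl.
Qed.

Lemma meas_set_and (A B : (R -> R) -> Prop) :
  meas_set A -> meas_set B -> meas_set (fun w => A w /\ B w).
Proof.
  intros HA HB.
  apply meas_set_ext with (fun w => forall n : nat, match n with O => A w | _ => B w end).
  - intros w _. split; [intros Hn; exact (conj (Hn O) (Hn 1%nat))|].
    intros [HAw HBw] [|n]; assumption.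
  - apply meas_set_Inter. now intros [|n].
Qed.

Lemma meas_set_Union_Z (A : Z -> (R -> R) -> Prop) :
  (forall k, meas_set (A k)) -> meas_set (fun w => exists k, A k w).
Proof.
  intros HA.
  apply meas_set_ext with
    (fun w => exists p q : nat, A (Z.of_nat p - Z.of_nat q)%Z w).
  - intros w _. split; [intros [p [q Hpq]]; eauto|].
    intros [k Hk]. exists (Z.to_nat k), (Z.to_nat (- k)).
    now replace (Z.of_nat (Z.to_nat k) - Z.of_nat (Z.to_nat (- k)))%Z with k by lia.
  - apply meas_set_Union; intro p; apply meas_set_Union; intro q. apply HA.
Qed.

Lemma meas_fun_ext {T : UniformSpace} (f g : (R -> R) -> T) :
  (forall w, Omega w -> f w = g w) -> meas_fun f -> meas_fun g.
Proof.
  intros fg Hf U HU. apply meas_set_ext with (fun w => U (f w)); [|now apply Hf].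
  intros w Hw. now rewrite (fg w Hw).
Qed.

Lemma meas_fun_const {T : UniformSpace} (c : T) : meas_fun (fun _ => c).
Proof. intros U _. apply meas_set_const. Qed.

Lemma meas_fun_eval (t : R) : meas_fun (fun w : R -> R => w t).
Proof. intros U HU. exists (fun w => U (w t)). split; [now apply cyl_gen|tauto]. Qed.

Lemma meas_fun_comp {T T' : UniformSpace} (g : T -> T') (f : (R -> R) -> T) :
  (forall x, continuous g x) -> meas_fun f -> meas_fun (fun w => g (f w)).
Proof.
  intros Hg Hf U HU. apply (Hf (fun x => U (g x))).
  apply open_comp; [intros x _; apply Hg|exact HU].
Qed.

Lemma inv_INR_S_lt (eps : R) : 0 < eps -> exists k : nat, / (INR k + 1) < eps.
Proof.
  intros Heps. destruct (archimed_cor1 eps Heps) as [k [Hk Hk0]].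
  exists k. eapply Rle_lt_trans; [|exact Hk].
  apply Rinv_le_contravar; [apply lt_0_INR; exact Hk0|lra].
Qed.

Lemma meas_fun_lim {T : UniformSpace} (f : nat -> (R -> R) -> T) (g : (R -> R) -> T) :
  (forall n, meas_fun (f n)) ->
  (forall w, Omega w -> filterlim (fun n => f n w) eventually (locally (g w))) ->
  meas_fun g.
Proof.
  intros Hf Hlim U HU.
  pose (V k x := exists d, 0 < d /\ forall y, ball x (/ (INR k + 1) + d) y -> U y).
  assert (Hk : forall k : nat, 0 < / (INR k + 1)).
  { intro k. apply Rinv_0_lt_compat. pose proof (pos_INR k). lra. }
  assert (HV : forall k, open (V k)).
  { intros k x [d [Hd HUd]]. exists (mkposreal (d / 2) ltac:(lra)). intros x' Hx'.
    exists (d / 2). split; [lra|]. intros y Hy. apply HUd.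
    replace (/ (INR k + 1) + d) with (d / 2 + (/ (INR k + 1) + d / 2)) by lra.
    now apply ball_triangle with x'. }
  apply meas_set_ext with (fun w => exists k N : nat, forall n, V k (f (N + n)%nat w)).
  - intros w Hw. split.
    + intros [k [N HN]].
      destruct (proj1 (filterlim_locally _ _) (Hlim w Hw) (mkposreal _ (Hk k))) as [M HM].
      destruct (HN M) as [d [Hd HUd]]. apply HUd.
      apply ball_le with (/ (INR k + 1)); [lra|]. apply ball_sym, HM. lia.
    + intros HUg. destruct (HU _ HUg) as [eps Heps].
      destruct (inv_INR_S_lt (eps / 3)) as [k Hke]; [apply Rdiv_lt_0_compat; [apply cond_pos|lra]|].
      destruct (proj1 (filterlim_locally _ _) (Hlim w Hw) (mkposreal (eps / 3) ltac:(pose proof (cond_pos eps); lra)))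
        as [N HN].
      exists k, N. intro n. exists (eps / 3). split; [pose proof (cond_pos eps); lra|].
      intros y Hy. apply Heps. apply ball_le with (eps / 3 + (/ (INR k + 1) + eps / 3)); [lra|].
      apply ball_triangle with (f (N + n)%nat w); [apply HN; lia|exact Hy].
  - apply meas_set_Union; intro k; apply meas_set_Union; intro N; apply meas_set_Inter; intro n.
    exact (Hf (N + n)%nat (V k) (HV k)).
Qed.

Lemma exists_rat_between (x y : R) : x < y ->
  exists (p : nat) (k : Z), x < IZR k / (INR p + 1) < y.
Proof.
  intros Hxy. destruct (inv_INR_S_lt (y - x)) as [p Hp]; [lra|].
  set (N := INR p + 1). assert (HN : 0 < N) by (pose proof (pos_INR p); unfold N; lra).
  exists p, (up (x * N)). destruct (archimed (x * N)) as [Hup1 Hup2].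
  assert (H1 : 1 < (y - x) * N).
  { apply (Rmult_lt_reg_r (/ N)); [now apply Rinv_0_lt_compat|].
    rewrite Rmult_assoc, Rinv_r, Rmult_1_l, Rmult_1_r by lra. exact Hp. }
  split; apply (Rmult_lt_reg_r N); auto; unfold Rdiv;
    rewrite Rmult_assoc, Rinv_l, Rmult_1_r by lra; nra.
Qed.

Lemma meas_fun_lt (f : (R -> R) -> R) (c : R) : meas_fun f -> meas_set (fun w => f w < c).
Proof. intros Hf. apply (Hf (fun x => x < c)), open_lt. Qed.

Lemma meas_fun_gt (f : (R -> R) -> R) (c : R) : meas_fun f -> meas_set (fun w => c < f w).
Proof. intros Hf. apply (Hf (fun x => c < x)), open_gt. Qed.

(* Every open subset of R is a union of intervals with rational end points. *)
Lemma meas_fun_R_intro (f : (R -> R) -> R) :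
  (forall c, meas_set (fun w => f w < c)) -> (forall c, meas_set (fun w => c < f w)) ->
  meas_fun f.
Proof.
  intros Hlt Hgt U HU.
  apply meas_set_ext with (fun w => exists (p : nat) (k : Z) (q : nat) (j : Z),
    (forall x, IZR k / (INR p + 1) < x < IZR j / (INR q + 1) -> U x) /\
    IZR k / (INR p + 1) < f w /\ f w < IZR j / (INR q + 1)).
  - intros w _. split.
    + intros [p [k [q [j [HUkj Hf]]]]]. now apply HUkj.
    + intros HUf. destruct (HU _ HUf) as [eps Heps]. pose proof (cond_pos eps).
      destruct (exists_rat_between (f w - eps) (f w)) as [p [k Hpk]]; [lra|].
      destruct (exists_rat_between (f w) (f w + eps)) as [q [j Hqj]]; [lra|].
      exists p, k, q, j. split; [|lra].
      intros x Hx. apply Heps. change (Rabs (x - f w) < eps). apply Rabs_def1; lra.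
  - do 4 (apply meas_set_Union || apply meas_set_Union_Z; intro).
    repeat apply meas_set_and; auto using meas_set_const.
Qed.

Lemma meas_fun_plus (f g : (R -> R) -> R) :
  meas_fun f -> meas_fun g -> meas_fun (fun w => f w + g w).
Proof.
  intros Hf Hg. apply meas_fun_R_intro; intro c.
  - apply meas_set_ext with (fun w => exists (p : nat) (k : Z),
      f w < IZR k / (INR p + 1) /\ g w < c - IZR k / (INR p + 1)).
    + intros w _. split; [intros [p [k Hpk]]; lra|].
      intros Hc. destruct (exists_rat_between (f w) (c - g w)) as [p [k Hpk]]; [lra|].
      exists p, k. lra.
    + apply meas_set_Union; intro p; apply meas_set_Union_Z; intro k.
      apply meas_set_and; [apply meas_fun_lt|apply meas_fun_lt]; assumption.
  - apply meas_set_ext with (fun w => exists (p : nat) (k : Z),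
      IZR k / (INR p + 1) < f w /\ c - IZR k / (INR p + 1) < g w).
    + intros w _. split; [intros [p [k Hpk]]; lra|].
      intros Hc. destruct (exists_rat_between (c - g w) (f w)) as [p [k Hpk]]; [lra|].
      exists p, k. lra.
    + apply meas_set_Union; intro p; apply meas_set_Union_Z; intro k.
      apply meas_set_and; [apply meas_fun_gt|apply meas_fun_gt]; assumption.
Qed.

Lemma up_mult_iff (x N : R) (k : Z) : 0 < N ->
  up (x * N) = k <-> (IZR k - 1) / N <= x < IZR k / N.
Proof.
  intros HN.
  assert (Hdiv : forall a, a / N * N = a) by (intro a; field; lra).
  split.
  - intros <-. destruct (archimed (x * N)).
    split; [apply (Rmult_le_reg_r N)|apply (Rmult_lt_reg_r N)]; rewrite ?Hdiv; lra.
  - intros [Hlo Hhi]. symmetry. apply tech_up.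
    + rewrite <- (Hdiv (IZR k)). now apply Rmult_lt_compat_r.
    + apply Rmult_le_compat_r with (r := N) in Hlo; [rewrite Hdiv in Hlo; lra|lra].
Qed.

(* [z] is approximated from above by the countably-valued [up (z * N) / N]. *)
Lemma meas_fun_comp_param {T : UniformSpace} (f : R -> (R -> R) -> T) (z : (R -> R) -> R) :
  meas_fun z -> (forall c, meas_fun (f c)) ->
  (forall w, Omega w -> continuous (fun c => f c w) (z w)) ->
  meas_fun (fun w => f (z w) w).
Proof.
  intros Hz Hf Hcont.
  assert (HN : forall n : nat, 0 < INR n + 1) by (intro n; pose proof (pos_INR n); lra).
  pose (zn n w := IZR (up (z w * (INR n + 1))) / (INR n + 1)).
  apply meas_fun_lim with (fun n w => f (zn n w) w).
  - intros n U HU.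
    apply meas_set_ext with (fun w => exists k : Z,
      (~ z w < (IZR k - 1) / (INR n + 1) /\ z w < IZR k / (INR n + 1)) /\
      U (f (IZR k / (INR n + 1)) w)).
    + intros w _. split.
      * intros [k [[Hk1 Hk2] HUk]]. unfold zn.
        rewrite (proj2 (up_mult_iff _ _ k (HN n))); [exact HUk|]. split; [lra|exact Hk2].
      * intros HU'. exists (up (z w * (INR n + 1))). split; [|exact HU'].
        destruct (proj1 (up_mult_iff (z w) _ _ (HN n)) eq_refl). lra.
    + apply meas_set_Union_Z; intro k. repeat apply meas_set_and.
      * now apply meas_set_compl, meas_fun_lt.
      * now apply meas_fun_lt.
      * now apply Hf.
  - intros w Hw. apply (filterlim_comp _ _ _ (fun n => zn n w) (fun c => f c w) eventually (locally (z w)));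
      [|exact (Hcont w Hw)].
    apply filterlim_locally. intros eps.
    destruct (inv_INR_S_lt eps (cond_pos eps)) as [N HNeps]. exists N. intros n Hn.
    change (Rabs (zn n w - z w) < eps).
    destruct (proj1 (up_mult_iff (z w) _ _ (HN n)) eq_refl) as [Hlo Hhi]. fold (zn n w) in Hhi.
    assert (Hinv : / (INR n + 1) <= / (INR N + 1)).
    { apply Rinv_le_contravar; [apply HN|]. apply le_INR in Hn. lra. }
    assert (E : (IZR (up (z w * (INR n + 1))) - 1) / (INR n + 1) = zn n w - / (INR n + 1))
      by (unfold zn; field; specialize (HN n); lra).
    rewrite Rabs_pos_eq; lra.
Qed.

(** * Measurability of [z] *)

Lemma continuous_Rmult_l (c x : R) : continuous (fun y => c * y) x.
Proof. apply (@ex_derive_continuous R_AbsRing R_NormedModule). auto_derive. exact I. Qed.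

Lemma unif_part_Riemann_fine (a b : R) : a < b ->
  filterlim (fun n => SF_seq_f2 (fun _ y => y) (unif_part a b n)) eventually (Riemann_fine a b).
Proof.
  intros Hab P [delta Hdelta].
  destruct (inv_INR_S_lt (delta / (b - a))) as [N HN].
  { apply Rdiv_lt_0_compat; [apply cond_pos|lra]. }
  exists N. intros n Hn.
  destruct (Riemann_fine_unif_part (fun _ y => y) a b n) as [Hstep [Hptd [Hh Hlast]]];
    [intros; lra|lra|].
  apply Hdelta.
  - eapply Rle_lt_trans; [exact Hstep|].
    assert (Hinv : / (INR n + 1) <= / (INR N + 1)).
    { apply Rinv_le_contravar; [pose proof (pos_INR N); lra|]. apply le_INR in Hn. lra. }
    apply Rle_lt_trans with ((b - a) * / (INR N + 1)); [apply Rmult_le_compat_l; lra|].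
    apply (Rmult_lt_reg_l (/ (b - a))); [apply Rinv_0_lt_compat; lra|].
    rewrite <- Rmult_assoc, Rinv_l, Rmult_1_l by lra. now rewrite Rmult_comm.
  - rewrite Rmin_left, Rmax_right by lra. auto.
Qed.

Lemma meas_fun_Riemann_sum (f : (R -> R) -> R -> R) (ptd : SF_seq) :
  (forall t, meas_fun (fun w => f w t)) -> meas_fun (fun w => Riemann_sum (f w) ptd).
Proof.
  intros Hf. induction ptd as [x0|[x t] ptd IH] using SF_cons_ind.
  - apply meas_fun_ext with (fun _ => 0); [reflexivity|apply meas_fun_const].
  - apply meas_fun_ext with (fun w => (SF_h ptd - x) * f w t + Riemann_sum (f w) ptd).
    { intros w _. now rewrite Riemann_sum_cons. }
    apply meas_fun_plus; [|exact IH].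
    apply (meas_fun_comp (fun y => (SF_h ptd - x) * y)); [|apply Hf].
    intro y. apply continuous_Rmult_l.
Qed.

Lemma meas_fun_RInt (f : (R -> R) -> R -> R) (a b : R) : a < b ->
  (forall t, meas_fun (fun w => f w t)) -> (forall w, Omega w -> ex_RInt (f w) a b) ->
  meas_fun (fun w => RInt (f w) a b).
Proof.
  intros Hab Hf Hex.
  apply meas_fun_lim with (fun n w => Riemann_sum (f w) (SF_seq_f2 (fun _ y => y) (unif_part a b n))).
  - intro n. now apply meas_fun_Riemann_sum.
  - intros w Hw.
    eapply filterlim_ext;
      [|exact (filterlim_comp _ _ _ _ _ _ _ _ (unif_part_Riemann_fine a b Hab) (RInt_correct _ _ _ (Hex w Hw)))].
    intro n. simpl. rewrite sign_eq_1 by lra. apply Rmult_1_l.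
Qed.

Lemma Omega_exp_bound (w : R -> R) (d : R) : Omega w -> 0 < d ->
  exists C, 0 <= C /\ forall t, t <= 0 -> Rabs (w t) <= C * exp (- d * t).
Proof.
  intros [Hcont [_ [_ Hsub]]] Hd.
  destruct (Hsub (ball 0 (mkposreal 1 Rlt_0_1)) (locally_ball _ _)) as [M HM].
  set (M' := Rmin M (-1)).
  assert (HM'M : M' <= M) by apply Rmin_l. assert (HM'1 : M' <= -1) by apply Rmin_r.
  destruct (continuity_ab_maj (fun t => Rabs (w t)) M' 0) as [tmax [Hmax _]].
  { lra. }
  { intros c _. apply continuity_pt_filterlim, (continuous_Rabs_comp w), Hcont. }
  set (B := Rabs (w tmax)).
  assert (HB : 0 <= B) by apply Rabs_pos.
  assert (Hd' : 0 < / d) by (apply Rinv_0_lt_compat; exact Hd).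
  exists (B + / d). split; [lra|]. intros t Ht.
  assert (Hexp1 : 1 + - d * t <= exp (- d * t)) by apply exp_ineq1_le.
  assert (Hdt : 0 <= - d * t) by nra.
  destruct (Rle_lt_dec M' t) as [HtM|HtM].
  - specialize (Hmax t (conj HtM Ht)). simpl in Hmax. fold B in Hmax. nra.
  - specialize (HM t ltac:(lra)). change (Rabs (w t / t - 0) < 1) in HM.
    rewrite Rminus_0_r, Rabs_div, (Rabs_left t) in HM by lra.
    assert (Hwt : Rabs (w t) < - t).
    { apply (Rmult_lt_reg_r (/ - t)); [apply Rinv_0_lt_compat; lra|].
      rewrite Rinv_r by lra. exact HM. }
    assert (E : / d * (- d * t) = - t) by (field; lra).
    nra.
Qed.

Lemma RInt_exp_decay_bound (f : R -> R) (C d a b : R) : 0 < d -> 0 <= C -> a <= b ->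
  (forall t, continuous f t) -> (forall t, t <= b -> Rabs (f t) <= C * exp (d * t)) ->
  Rabs (RInt f a b) <= C / d * exp (d * b).
Proof.
  intros Hd HC Hab Hf Hbound.
  set (G t := C / d * exp (d * t)).
  assert (HG : is_RInt (fun t => C * exp (d * t)) a b (minus (G b) (G a))).
  { apply (@is_RInt_derive R_CompleteNormedModule).
    - intros x _. unfold G. auto_derive; [exact I|]. field. lra.
    - intros x _. apply (@ex_derive_continuous R_AbsRing R_NormedModule). auto_derive. exact I. }
  assert (HGa : 0 <= G a).
  { unfold G. apply Rmult_le_pos; [apply Rmult_le_pos; [lra|left; now apply Rinv_0_lt_compat]|].
    left; apply exp_pos. }
  assert (Hle : Rabs (RInt f a b) <= G b - G a).
  { apply (norm_RInt_le f (fun t => C * exp (d * t)) a b _ _ Hab).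
    - intros x Hx. apply Hbound. lra.
    - apply (@RInt_correct R_CompleteNormedModule), (@ex_RInt_continuous R_CompleteNormedModule).
      intros; apply Hf.
    - exact HG. }
  unfold G in *. lra.
Qed.

Lemma exp_tail_small (K d eps : R) : 0 < d -> 0 <= K -> 0 < eps ->
  exists M, M <= 0 /\ forall t, t <= M -> K * exp (d * t) < eps.
Proof.
  intros Hd HK Heps. set (y := eps / (K + 1)).
  assert (Hy : 0 < y) by (apply Rdiv_lt_0_compat; lra).
  exists (Rmin 0 (ln y / d)). split; [apply Rmin_l|]. intros t Ht.
  assert (Hdt : d * t <= ln y).
  { pose proof (Rmin_r 0 (ln y / d)).
    replace (ln y) with (d * (ln y / d)) by (field; lra). apply Rmult_le_compat_l; lra. }
  assert (Hexp : exp (d * t) <= y).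
  { rewrite <- (exp_ln y Hy). destruct Hdt as [Hlt|Heq]; [left; now apply exp_increasing|now rewrite Heq; right]. }
  assert (Hy' : K * y < eps).
  { unfold y. apply (Rmult_lt_reg_r (K + 1)); [lra|]. unfold Rdiv.
    rewrite Rmult_assoc, (Rmult_assoc eps), Rinv_l by lra. nra. }
  pose proof (exp_pos (d * t)). nra.
Qed.

Lemma RInt_lim_m_infty (f : R -> R) (C d : R) : 0 < d -> 0 <= C ->
  (forall t, continuous f t) -> (forall t, t <= 0 -> Rabs (f t) <= C * exp (d * t)) ->
  exists l, filterlim (fun a => RInt f a 0) (Rbar_locally m_infty) (locally l).
Proof.
  intros Hd HC Hf Hbound.
  assert (Hex : forall a b, ex_RInt f a b).
  { intros a b. apply (@ex_RInt_continuous R_CompleteNormedModule). intros; apply Hf. }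
  apply (filterlim_locally_cauchy (F := Rbar_locally m_infty)).
  intros eps. destruct (exp_tail_small (C / d) d eps) as [M [HM0 HM]]; auto.
  { apply Rmult_le_pos; [lra|left; now apply Rinv_0_lt_compat]. }
  { apply cond_pos. }
  exists (fun a => a < M). split; [now exists M|].
  intros u v Hu Hv. change (Rabs (RInt f v 0 - RInt f u 0) < eps).
  rewrite <- (RInt_Chasles f v u 0) by apply Hex.
  change (Rabs (RInt f v u + RInt f u 0 - RInt f u 0) < eps).
  rewrite Rplus_minus_r.
  assert (Htail : forall a b, a <= b -> b < M -> Rabs (RInt f a b) < eps).
  { intros a b Hab HbM. eapply Rle_lt_trans; [apply (RInt_exp_decay_bound f C d); auto|].
    - intros t Ht. apply Hbound. lra.
    - apply HM. lra. }
  destruct (Rle_lt_dec v u) as [Hvu|Huv]; [now apply Htail|].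
  rewrite <- (opp_RInt_swap f u v) by apply Hex.
  change (Rabs (- RInt f u v) < eps). rewrite Rabs_Ropp. apply Htail; lra.
Qed.

Lemma is_RInt_gen_at_point_lim {V : CompleteNormedModule R_AbsRing} (Fa : (R -> Prop) -> Prop)
  (f : R -> V) (b : R) (l : V) : Filter Fa -> (forall a, ex_RInt f a b) ->
  filterlim (fun a => RInt f a b) Fa (locally l) -> is_RInt_gen f Fa (at_point b) l.
Proof.
  intros HFa Hex Hlim P HP.
  apply Filter_prod with (fun a => P (RInt f a b)) (fun c => c = b).
  - exact (Hlim P HP).
  - reflexivity.
  - intros a c Ha ->. exists (RInt f a b). split; [apply RInt_correct, Hex|exact Ha].
Qed.

Definition ou_integrand (mu : R) (w : R -> R) (t : R) : R := exp (mu * t) * w t.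

Lemma continuous_ou_integrand (mu : R) (w : R -> R) (t : R) :
  Omega w -> continuous (ou_integrand mu w) t.
Proof.
  intros Hw. apply (continuous_mult (fun t => exp (mu * t)) w).
  - apply continuous_exp_comp, continuous_Rmult_l.
  - apply Hw.
Qed.

Lemma zOU_lim (mu : R) (w : R -> R) : 0 < mu -> Omega w ->
  filterlim (fun a => - mu * RInt (ou_integrand mu w) a 0) (Rbar_locally m_infty) (locally (zOU mu w)).
Proof.
  intros Hmu Hw. set (f := ou_integrand mu w).
  assert (Hf : forall t, continuous f t) by (intro; now apply continuous_ou_integrand).
  destruct (Omega_exp_bound w (mu / 2) Hw) as [C [HC HCw]]; [lra|].
  destruct (RInt_lim_m_infty f C (mu / 2)) as [l Hl]; [lra|exact HC|exact Hf|..].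
  { intros t Ht. unfold f, ou_integrand. rewrite Rabs_mult, (Rabs_pos_eq (exp _)) by (left; apply exp_pos).
    replace (exp (mu / 2 * t)) with (exp (mu * t) * exp (- (mu / 2) * t))
      by (rewrite <- exp_plus; f_equal; field).
    specialize (HCw t Ht). pose proof (exp_pos (mu * t)). nra. }
  replace (zOU mu w) with (- mu * l).
  - apply (filterlim_comp _ _ _ (fun a => RInt f a 0) (fun x => - mu * x) _ (locally l)); [exact Hl|].
    apply continuous_Rmult_l.
  - unfold zOU. f_equal. symmetry.
    apply (@is_RInt_gen_unique R_CompleteNormedModule).
    { apply Proper_StrongProper, Rbar_locally_filter. }
    { apply Proper_StrongProper, (@at_point_filter R_UniformSpace). }
    apply is_RInt_gen_at_point_lim; [apply Rbar_locally_filter| |exact Hl].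
    intro a. apply (@ex_RInt_continuous R_CompleteNormedModule). intros; apply Hf.
Qed.

Lemma filterlim_opp_INR_m_infty :
  filterlim (fun n => - INR n - 1) eventually (Rbar_locally m_infty).
Proof.
  intros P [M HM].
  destruct (INR_unbounded (Rabs M)) as [N HN].
  exists N. intros n Hn. apply HM. apply le_INR in Hn. pose proof (Rle_abs (- M)).
  rewrite Rabs_Ropp in *. lra.
Qed.

Lemma meas_fun_zOU (mu : R) : 0 < mu -> meas_fun (zOU mu).
Proof.
  intros Hmu.
  apply meas_fun_lim with
    (fun n w => - mu * RInt (ou_integrand mu w) (- INR n - 1) 0).
  - intro n. apply (meas_fun_comp (fun x => - mu * x)); [intro; apply continuous_Rmult_l|].
    apply meas_fun_RInt.
    + pose proof (pos_INR n). lra.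
    + intro t. apply (meas_fun_comp (fun x => exp (mu * t) * x));
        [intro; apply continuous_Rmult_l|apply meas_fun_eval].
    + intros w Hw. apply (@ex_RInt_continuous R_CompleteNormedModule). intros t _.
      now apply continuous_ou_integrand.
  - intros w Hw. exact (filterlim_comp _ _ _ _ _ _ _ _ filterlim_opp_INR_m_infty (zOU_lim mu w Hmu Hw)).
Qed.

(** * Center manifolds under a random scaling *)

Lemma continuous_lipschitz_on_comp {V W : NormedModule R_AbsRing} (g : V -> W) (P : V -> Prop)
  (L : R) (k : R -> V) (c : R) :
  (forall x y, P x -> P y -> norm (minus (g x) (g y)) <= L * norm (minus x y)) ->
  (forall t, P (k t)) -> continuous k c -> continuous (fun t => g (k t)) c.
Proof.
  intros Hg HP Hk. apply filterlim_locally_ball_norm. intros eps.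
  assert (HL : 0 < Rabs L + 1) by (pose proof (Rabs_pos L); lra).
  destruct (proj1 (filterlim_locally_ball_norm _ _) Hk
    (mkposreal (eps / (Rabs L + 1)) (Rdiv_lt_0_compat _ _ (cond_pos eps) HL))) as [delta Hdelta].
  exists delta. intros t Ht. specialize (Hdelta t Ht). unfold ball_norm in *. simpl in Hdelta.
  eapply Rle_lt_trans; [apply Hg; apply HP|].
  pose proof (Rle_abs L). pose proof (norm_ge_0 (minus (k t) (k c))).
  assert (E : (Rabs L + 1) * (eps / (Rabs L + 1)) = eps) by (field; lra).
  nra.
Qed.

Section RandomScaling.

Context {H : CompleteNormedModule R_AbsRing}.

Local Notation HModule := (CompleteNormedModule.ModuleSpace R_AbsRing H).
Local Notation HNormed := (CompleteNormedModule.NormedModule R_AbsRing H).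

(* The module laws restated at the [CompleteNormedModule] structure, so that they can be
   used for rewriting in [H]. *)
Lemma scal_plus_r (a : R) (x y : H) : scal a (plus x y) = plus (scal a x) (scal a y).
Proof. exact (@scal_distr_l R_Ring HModule a x y). Qed.

Lemma scal_minus_r (a : R) (x y : H) : scal a (minus x y) = minus (scal a x) (scal a y).
Proof. unfold minus. rewrite scal_plus_r. f_equal. exact (@scal_opp_r R_Ring HModule a y). Qed.

Lemma scal_zero_H (a : R) : scal a (@zero H) = (@zero H).
Proof. exact (@scal_zero_r R_Ring HModule a). Qed.

Lemma norm_scal_H (a : R) (x : H) : norm (scal a x) <= Rabs a * norm x.
Proof. exact (@norm_scal R_AbsRing HNormed a x). Qed.

Lemma scal_exp_oppK (a : R) (x : H) : scal (exp (- a)) (scal (exp a) x) = x.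
Proof.
  rewrite scal_assoc. replace (mult (exp (- a)) (exp a)) with (@one R_Ring).
  - exact (@scal_one R_Ring HModule x).
  - change (1 = exp (- a) * exp a). now rewrite <- exp_plus, Rplus_opp_l, exp_0.
Qed.

Lemma scal_exp_Kopp (a : R) (x : H) : scal (exp a) (scal (exp (- a)) x) = x.
Proof. rewrite <- (Ropp_involutive a) at 1. apply scal_exp_oppK. Qed.

Variable Pc : H -> H.
Hypothesis Pc_scal : forall a x, Pc (scal a x) = scal a (Pc x).
Variable r : (R -> R) -> R.

Definition scaled_set (M : (R -> R) -> H -> Prop) (w : R -> R) (x : H) : Prop :=
  exists y, M w y /\ x = scal (exp (r w)) y.

Definition scaled_graph (h : H -> (R -> R) -> H) (v : H) (w : R -> R) : H :=
  scal (exp (r w)) (h (scal (exp (- r w)) v) w).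

Lemma Pc_fixed_scal (a : R) (v : H) : Pc v = v -> Pc (scal a v) = scal a v.
Proof. intros Hv. now rewrite Pc_scal, Hv. Qed.

Lemma scaled_set_graph (M : (R -> R) -> H -> Prop) (h : H -> (R -> R) -> H) (w : R -> R) :
  (forall x, M w x <-> exists v, Pc v = v /\ x = plus v (h v w)) ->
  forall x, scaled_set M w x <-> exists v, Pc v = v /\ x = plus v (scaled_graph h v w).
Proof.
  intros HM x. unfold scaled_set, scaled_graph. split.
  - intros [y [Hy ->]]. destruct (proj1 (HM y) Hy) as [v [Hv ->]].
    exists (scal (exp (r w)) v). split; [now apply Pc_fixed_scal|].
    now rewrite scal_exp_oppK, scal_plus_r.
  - intros [v [Hv ->]]. set (v0 := scal (exp (- r w)) v).
    exists (plus v0 (h v0 w)). split.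
    + apply HM. exists v0. split; [now apply Pc_fixed_scal|reflexivity].
    + unfold v0. now rewrite scal_plus_r, scal_exp_Kopp.
Qed.

Lemma scaled_graph_Pc (h : H -> (R -> R) -> H) (w : R -> R) :
  (forall v, Pc v = v -> Pc (h v w) = zero) ->
  forall v, Pc v = v -> Pc (scaled_graph h v w) = zero.
Proof.
  intros Hh v Hv. unfold scaled_graph.
  rewrite Pc_scal, Hh; [apply scal_zero_H|]. now apply Pc_fixed_scal.
Qed.

Lemma scaled_graph_zero (h : H -> (R -> R) -> H) (w : R -> R) :
  h zero w = zero -> scaled_graph h zero w = zero.
Proof. intros Hh. unfold scaled_graph. now rewrite scal_zero_H, Hh, scal_zero_H. Qed.

Lemma scaled_graph_lipschitz (h : H -> (R -> R) -> H) (w : R -> R) (L : R) : 0 <= L ->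
  (forall v1 v2, Pc v1 = v1 -> Pc v2 = v2 ->
     norm (minus (h v1 w) (h v2 w)) <= L * norm (minus v1 v2)) ->
  forall v1 v2, Pc v1 = v1 -> Pc v2 = v2 ->
    norm (minus (scaled_graph h v1 w) (scaled_graph h v2 w)) <= L * norm (minus v1 v2).
Proof.
  intros HL Hh v1 v2 Hv1 Hv2. unfold scaled_graph.
  set (e := exp (r w)). set (ei := exp (- r w)).
  assert (He : 0 < e) by apply exp_pos. assert (Hei : 0 < ei) by apply exp_pos.
  assert (Hee : e * ei = 1) by (unfold e, ei; now rewrite <- exp_plus, Rplus_opp_r, exp_0).
  rewrite <- scal_minus_r.
  eapply Rle_trans; [apply norm_scal_H|]. rewrite Rabs_pos_eq by lra.
  assert (Hh' : norm (minus (h (scal ei v1) w) (h (scal ei v2) w)) <= L * (ei * norm (minus v1 v2))).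
  { eapply Rle_trans; [apply Hh; now apply Pc_fixed_scal|].
    apply Rmult_le_compat_l; [exact HL|]. rewrite <- scal_minus_r.
    eapply Rle_trans; [apply norm_scal_H|]. rewrite Rabs_pos_eq by lra. apply Rle_refl. }
  apply Rmult_le_compat_l with (r := e) in Hh'; [|lra].
  replace (e * (L * (ei * norm (minus v1 v2)))) with ((e * ei) * (L * norm (minus v1 v2))) in Hh' by ring.
  now rewrite Hee, Rmult_1_l in Hh'.
Qed.

Lemma continuous_scaled_graph_param (h : H -> (R -> R) -> H) (w : R -> R) (L : R) (v : H) (c : R) :
  (forall v1 v2, Pc v1 = v1 -> Pc v2 = v2 ->
     norm (minus (h v1 w) (h v2 w)) <= L * norm (minus v1 v2)) ->
  Pc v = v -> continuous (fun c => scal (exp c) (h (scal (exp (- c)) v) w)) c.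
Proof.
  intros Hh Hv.
  apply (@continuous_scal _ _ HNormed exp (fun c => h (scal (exp (- c)) v) w));
    [apply continuous_exp|].
  apply (@continuous_lipschitz_on_comp HNormed HNormed (fun x => h x w) (fun x => Pc x = x) L);
    [exact Hh| |].
  - intro t. now apply Pc_fixed_scal.
  - apply (@continuous_scal_l _ _ HNormed (fun c => exp (- c))).
    apply (@ex_derive_continuous R_AbsRing R_NormedModule). auto_derive. exact I.
Qed.

Lemma meas_fun_scaled_graph (h : H -> (R -> R) -> H) : meas_fun r ->
  (forall v, Pc v = v -> meas_fun (h v)) ->
  (forall w, Omega w -> exists L, forall v1 v2, Pc v1 = v1 -> Pc v2 = v2 ->
     norm (minus (h v1 w) (h v2 w)) <= L * norm (minus v1 v2)) ->
  forall v, Pc v = v -> meas_fun (scaled_graph h v).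
Proof.
  intros Hr Hmeas Hlip v Hv.
  apply (meas_fun_comp_param (fun c w => scal (exp c) (h (scal (exp (- c)) v) w)) r Hr).
  - intro c. apply (@meas_fun_comp _ _ (fun x : H => scal (exp c) x)).
    + intro x. apply (@continuous_scal_r _ _ HNormed), continuous_id.
    + now apply Hmeas, Pc_fixed_scal.
  - intros w Hw. destruct (Hlip w Hw) as [L HL]. now apply (continuous_scaled_graph_param h w L).
Qed.

Lemma scaled_set_forward_invariant (phi psi : R -> H -> (R -> R) -> H) (M : (R -> R) -> H -> Prop) :
  (forall t x w, psi t (scal (exp (r w)) x) w = scal (exp (r (theta t w))) (phi t x w)) ->
  (forall w, Omega w -> forall t, 0 <= t -> forall x, M w x -> M (theta t w) (phi t x w)) ->
  forall w, Omega w -> forall t, 0 <= t -> forall x,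
    scaled_set M w x -> scaled_set M (theta t w) (psi t x w).
Proof.
  intros Hconj Hinv w Hw t Ht x [y [Hy ->]].
  exists (phi t y w). split; [now apply Hinv|apply Hconj].
Qed.

Theorem center_manifold_scaled (phi psi : R -> H -> (R -> R) -> H) (M : (R -> R) -> H -> Prop)
  (h : H -> (R -> R) -> H) : meas_fun r ->
  (forall t x w, psi t (scal (exp (r w)) x) w = scal (exp (r (theta t w))) (phi t x w)) ->
  center_manifold_with Pc phi M h ->
  center_manifold_with Pc psi (scaled_set M) (scaled_graph h).
Proof.
  intros Hr Hconj [Hgraph [HPc [Hlip [Hzero [Hmeas Hinv]]]]].
  split; [|split; [|split; [|split; [|split]]]].
  - intros w Hw. now apply scaled_set_graph, Hgraph.
  - intros w Hw. now apply scaled_graph_Pc, HPc.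
  - intros w Hw. destruct (Hlip w Hw) as [L [HL HhL]].
    exists L. split; [exact HL|]. now apply scaled_graph_lipschitz.
  - intros w Hw. now apply scaled_graph_zero, Hzero.
  - apply meas_fun_scaled_graph; [exact Hr|exact Hmeas|].
    intros w Hw. destruct (Hlip w Hw) as [L [_ HhL]]. now exists L.
  - now apply scaled_set_forward_invariant with phi.
Qed.

End RandomScaling.

Lemma hat_u_conj {H : CompleteNormedModule R_AbsRing} (mu : R) (u : R -> H -> (R -> R) -> H)
  (t : R) (x : H) (w : R -> R) :
  hat_u mu u t (scal (exp (zOU mu w)) x) w = scal (exp (zOU mu (theta t w))) (u t x w).
Proof. unfold hat_u. now rewrite scal_exp_oppK. Qed.

Theorem theorem3p2
  (H : CompleteNormedModule R_AbsRing)
  (S : R -> H -> H) (Pc Pu Ps : H -> H) (alpha beta gamma K : R)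
  (F : H -> H) (LF : R) (mu eta LipG : R)
  (u : R -> H -> (R -> R) -> H) (hc : H -> (R -> R) -> H) :
  @hilbert_norm H -> separable H ->
  C0_semigroup S ->
  exp_trichotomy S Pc Pu Ps alpha beta gamma K ->
  F zero = zero ->
  (forall x y, norm (minus (F x) (F y)) <= LF * norm (minus x y)) ->
  0 < mu ->
  (* Lip_u G *)
  0 <= LipG ->
  (forall w x y, norm (minus (Gfun mu F w x) (Gfun mu F w y)) <= LipG * norm (minus x y)) ->
  gamma < eta -> eta < Rmin beta alpha ->
  K * LipG * (/ (eta - gamma) + / (beta - eta) + / (alpha - eta)) < 1 ->
  is_mild_solution S mu F u ->
  (* M^c(omega) = {u0 : u(.,u0,omega) in C_eta} = {v + h^c(v,omega)} is the center manifold *)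
  center_manifold_with Pc u (Mc_eta S mu F eta) hc ->
  center_manifold_with Pc (hat_u mu u)
    (fun w x => exists y, Mc_eta S mu F eta w y /\ x = scal (exp (zOU mu w)) y)
    (fun v w => scal (exp (zOU mu w)) (hc (scal (exp (- zOU mu w)) v) w)).
Proof.
  (* The gap condition only serves to construct [M^c], which is given here. *)
  intros _ _ _ Htri _ _ Hmu _ _ _ _ _ _ Hcm.
  destruct Htri as [_ [_ [_ [[_ [Pc_scal _]] _]]]].
  apply (center_manifold_scaled Pc Pc_scal (zOU mu) u); [now apply meas_fun_zOU| |exact Hcm].
  apply hat_u_conj.
Qed.
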